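(* Let $W$ be a positive integer and let $\mathcal H$ be a real Hilbert space of dimension $d$ with $W<d\le\infty$. Let $\Phi:\mathbb R^W\to\mathcal H$ be a $C^2$ map such that the Jacobian (differential) $J_0=\frac{\partial\Phi}{\partial\mathbf w}(\mathbf 0)$ has full rank $W$. Then the set $F_\Phi$ of GF-learnable targets is not dense in $\mathcal H$.
   Context: For a target $\mathbf f\in\mathcal H$, let $L_{\mathbf f}(\mathbf w)=\frac12\|\mathbf f-\Phi(\mathbf w)\|^2_{\mathcal H}$ and let $\mathbf w(t)$, $t\ge0$, be the solution of the gradient flow $\frac{d\mathbf w}{dt}=-\nabla_{\mathbf w}L_{\mathbf f}(\mathbf w(t))$ with $\mathbf w(0)=\mathbf 0$. Then $F_\Phi=\{\mathbf f\in\mathcal H:\inf_{t\ge0}L_{\mathbf f}(\mathbf w(t))=0\}$. *)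

From HB Require Import structures.
From mathcomp Require Import all_boot all_order all_algebra.
From mathcomp Require Import all_classical all_reals all_analysis.
Set Implicit Arguments. Unset Strict Implicit. Unset Printing Implicit Defensive.
Import Order.TTheory GRing.Theory Num.Theory.
Import numFieldNormedType.Exports.
Local Open Scope classical_set_scope.
Local Open Scope ring_scope.

Section Defs.
Variable R : realType.

Definition is_inner_product (H : normedModType R) (inner : H -> H -> R) :=
  [/\ forall x y, inner x y = inner y x,
      forall a x y z, inner (a *: x + y) z = a * inner x z + inner y z
    & forall x, inner x x = `|x| ^+ 2].

Definition lin_indep (H : normedModType R) (n : nat) (v : 'I_n -> H) :=
  forall c : 'I_n -> R, \sum_(i < n) c i *: v i = 0 -> forall i, c i = 0.

Definition ebasis (W : nat) (i : 'I_W) : 'rV[R]_W := delta_mx 0 i.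

Definition gradient (W : nat) (L : 'rV[R]_W -> R) (w : 'rV[R]_W) : 'rV[R]_W :=
  \row_(i < W) ('D_(ebasis i) L w).

Definition C2 (W : nat) (H : normedModType R) (Phi : 'rV[R]_W -> H) :=
  [/\ forall x, differentiable Phi x,
      forall (i : 'I_W) x, differentiable (fun y => 'd Phi y (ebasis i)) x
    & forall i j : 'I_W,
        continuous (fun y => 'd (fun z => 'd Phi z (ebasis i)) y (ebasis j))].

Definition loss (W : nat) (H : normedModType R) (Phi : 'rV[R]_W -> H) (f : H)
  (w : 'rV[R]_W) : R := 2^-1 * `|f - Phi w| ^+ 2.

Definition GF_solution (W : nat) (L : 'rV[R]_W -> R) (w : R -> 'rV[R]_W) :=
  [/\ w 0 = 0,
      {within `[0, +oo[, continuous w}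
    & forall t : R, 0 < t -> derivable w t 1 /\ derive1 w t = - gradient L (w t)].

Definition GF_learnable (W : nat) (H : normedModType R) (Phi : 'rV[R]_W -> H)
  : set H :=
  [set f | exists w : R -> 'rV[R]_W,
      GF_solution (loss Phi f) w /\
      inf [set loss Phi f (w t) | t in `[0, +oo[%classic] = 0].

End Defs.

From HB Require Import structures.
From mathcomp Require Import all_boot all_order all_algebra.
From mathcomp Require Import all_classical all_reals all_analysis.
From mathcomp Require Import ring lra.
Import Order.TTheory GRing.Theory Num.Theory.
Import numFieldNormedType.Exports.
Local Open Scope classical_set_scope.
Local Open Scope ring_scope.

Set Implicit Arguments.
Unset Strict Implicit.

(* Let J = dPhi(0); being injective, it satisfies |J w| >= c |w|, and since
   dim H > W there is a unit vector n orthogonal to its range. Take r such that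
   Phi stays within (c/8)|w| of its linearization on the ball |w| <= r, and put
   a = c r / 8. For every target f within a/2 of Phi(0) + 2a n, the loss on the
   sphere |w| = r exceeds the loss at w = 0. The loss is nonincreasing along the
   gradient flow started at 0, so the flow never reaches that sphere; inside the
   ball, the n-component of f - Phi(w) keeps |f - Phi(w)| >= a/2. Hence the
   loss stays above a^2/8: the ball around Phi(0) + 2a n misses F_Phi. *)

Lemma injective_linear_bounded_below (R : realType) (W : nat)
    (H : normedModType R) (J : {linear 'rV[R]_W -> H}) :
  continuous J -> injective J ->
  exists2 c, 0 < c & forall w, c * `|w| <= `|J w|.
Proof.
case: W J => [|k] J J_cont J_inj.
  by exists 1 => // w; rewrite [w]thinmx0 normr0 mulr0.
pose w0 : 'rV[R]_k.+1 := delta_mx 0 ord0.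
have w0_gt0 : 0 < `|w0|.
  rewrite normr_gt0; apply/negP => /eqP/rowP/(_ ord0); rewrite !mxE !eqxx /=.
  by move/eqP; rewrite oner_eq0.
pose S := [set w : 'rV[R]_k.+1 | `|w| = `|w0|].
have S_compact : compact S.
  apply: bounded_closed_compact.
    exists `|w0|; split; first exact: num_real.
    by move=> M w0_M w /= ->; apply: ltW.
  apply: (@preimage_closed _ _ (fun w : 'rV[R]_k.+1 => `|w|) [set `|w0|]).
    by move=> w _; exact: norm_continuous.
  exact: closed_eq.
have JS_cont : {within S, continuous (fun w => `|J w|)}.
  apply: continuous_subspaceT => w.
  exact: continuous_comp (J_cont w) (@norm_continuous _ _ _).
have [u uS u_min] := EVT_min_rV (ex_intro _ w0 erefl) S_compact JS_cont.
move: uS; rewrite inE /S /= => uS.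
have u_neq0 : u != 0 by apply: contraTneq w0_gt0 => u0; rewrite -uS u0 normr0 ltxx.
have Ju_gt0 : 0 < `|J u| by rewrite normr_gt0 -(linear0 J) (inj_eq J_inj).
exists (`|J u| / `|w0|) => [|w]; first by rewrite divr_gt0.
have [->|w_neq0] := eqVneq w 0; first by rewrite normr0 mulr0.
have w_gt0 : 0 < `|w| by rewrite normr_gt0.
have : `|J u| <= `|J ((`|w0| / `|w|) *: w)|.
  apply: u_min; rewrite inE /S /= normrZ ger0_norm ?divr_ge0 //.
  by rewrite divfK ?gt_eqF.
rewrite linearZ normrZ ger0_norm ?divr_ge0 // => Ju_le.
rewrite -ler_pdivlMr // ler_pdivrMr //; apply: le_trans Ju_le _.
by rewrite mulrC mulrA mulrAC.
Qed.

Lemma differentiable_remainder_le (R : realType) (V H : normedModType R)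
    (f : V -> H) (p : V) (eps : R) :
  differentiable f p -> 0 < eps ->
  exists2 r, 0 < r &
    forall x, `|x| <= r -> `|f (x + p) - f p - 'd f p x| <= eps * `|x|.
Proof.
move=> f_diff eps_gt0.
have /nbhs_norm0P[r /= r_gt0 rem_le] :=
  proj1 (eqaddoP _ _ _ _) (diff_locally f_diff) eps eps_gt0.
exists (r / 2) => [|x x_le]; first by rewrite divr_gt0.
have := rem_le x; rewrite /= !fctE opprD addrA; apply.
by rewrite (le_lt_trans x_le) // ltr_pdivrMr // ltr_pMr // ltr1n.
Qed.

Section GradientFlow.
Variables (R : realType) (W : nat) (L : 'rV[R]_W -> R).
Hypothesis L_diff : forall x, differentiable L x.

Lemma diff_gradient_ge0 x : 0 <= 'd L x (gradient L x).
Proof.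
rewrite [X in 'd L x X]row_sum_delta linear_sum /=.
apply: sumr_ge0 => i _; rewrite linearZ /= mxE /ebasis deriveE //.
by rewrite -[_ *: _]expr2 sqr_ge0.
Qed.

Variable w : R -> 'rV[R]_W.
Hypothesis w_GF : GF_solution L w.

Lemma GF_solution_le_start t : 0 <= t -> L (w t) <= L (w 0).
Proof.
case: w_GF => _ w_cont w_ode; rewrite le_eqVlt => /orP[/eqP <-//|t_gt0].
pose dLw s := 'd L (w s) (derive1 w s).
have [] := @MVT R (L \o w) dLw 0 t t_gt0.
- move=> s; rewrite in_itv /= => /andP[s_gt0 _].
  have [w_der _] := w_ode s s_gt0.
  have w_diff : differentiable w s by apply/derivable1_diffP.
  have Lw_diff : differentiable (L \o w) s by apply: differentiable_comp.
  apply: DeriveDef; first by apply/derivable1_diffP.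
  by rewrite deriveE // diff_comp // /dLw /= derive1E'.
- apply: continuous_subspaceW (fun s =>
    continuous_comp (w_cont s) (differentiable_continuous (L_diff (w s)))).
  by move=> s /=; rewrite !in_itv /= => /andP[->].
move=> s; rewrite in_itv /= => /andP[s_gt0 _] dLw_eq.
rewrite -subr_le0 [leLHS]dLw_eq subr0 /dLw; have [_ ->] := w_ode s s_gt0.
by rewrite linearN /= mulNr oppr_le0 mulr_ge0 ?diff_gradient_ge0 // ltW.
Qed.

Lemma GF_solution_trapped r : 0 < r -> (forall x, `|x| = r -> L 0 < L x) ->
  forall t, 0 <= t -> `|w t| < r.
Proof.
case: (w_GF) => w0 w_cont _ r_gt0 L_sphere t t_ge0.
rewrite ltNge; apply/negP => r_le.
have norm_w_cont : {within `[0, t], continuous (fun s => `|w s|)}.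
  apply: continuous_subspaceW
    (fun s => continuous_comp (w_cont s) (@norm_continuous _ _ _)).
  by move=> s /=; rewrite !in_itv /= => /andP[->].
have [|s s_in ws_r] := @IVT R (fun s => `|w s|) 0 t r t_ge0 norm_w_cont.
  by rewrite w0 normr0 /= (min_l (normr_ge0 _)) (max_r (normr_ge0 _)) r_le ltW.
move: s_in; rewrite in_itv /= => /andP[s_ge0 _].
have := lt_le_trans (L_sphere _ ws_r) (GF_solution_le_start s_ge0).
by rewrite w0 ltxx.
Qed.

End GradientFlow.

Section InnerProduct.
Variables (R : realType) (H : normedModType R) (inner : H -> H -> R).
Hypothesis inner_ip : is_inner_product inner.

Lemma innerC x y : inner x y = inner y x. Proof. by case: inner_ip. Qed.

Lemma inner_self x : inner x x = `|x| ^+ 2. Proof. by case: inner_ip. Qed.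

Lemma innerZDl a x y z : inner (a *: x + y) z = a * inner x z + inner y z.
Proof. by case: inner_ip. Qed.

Lemma inner0l z : inner 0 z = 0.
Proof. by have := innerZDl (-1) 0 0 z; rewrite scaler0 addr0 mulN1r addNr. Qed.

Lemma innerDl x y z : inner (x + y) z = inner x z + inner y z.
Proof. by rewrite -[x]scale1r innerZDl mul1r scale1r. Qed.

Lemma innerZl a x z : inner (a *: x) z = a * inner x z.
Proof. by rewrite -[a *: x]addr0 innerZDl inner0l addr0. Qed.

Lemma innerBl x y z : inner (x - y) z = inner x z - inner y z.
Proof. by rewrite innerDl -scaleN1r innerZl mulN1r. Qed.

Lemma inner_suml I (s : seq I) (P : pred I) (F : I -> H) z :
  inner (\sum_(i <- s | P i) F i) z = \sum_(i <- s | P i) inner (F i) z.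
Proof. by elim/big_rec2: _ => [|i y1 y2 _ <-]; rewrite ?inner0l ?innerDl. Qed.

Lemma inner_linear x : linear_for *:%R (inner x).
Proof. by move=> a u v; rewrite !(innerC x) innerZDl. Qed.

Lemma innerDr x y z : inner z (x + y) = inner z x + inner z y.
Proof. by rewrite !(innerC z) innerDl. Qed.

Lemma innerZr a x z : inner z (a *: x) = a * inner z x.
Proof. by rewrite !(innerC z) innerZl. Qed.

Lemma innerBr x y z : inner z (x - y) = inner z x - inner z y.
Proof. by rewrite !(innerC z) innerBl. Qed.

Lemma sqr_normD x y : `|x + y| ^+ 2 = `|x| ^+ 2 + 2 * inner x y + `|y| ^+ 2.
Proof. by rewrite -!inner_self innerDl !innerDr (innerC y x); ring. Qed.

Lemma sqr_normB x y : `|x - y| ^+ 2 = `|x| ^+ 2 - 2 * inner x y + `|y| ^+ 2.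
Proof. by rewrite -!inner_self innerBl !innerBr (innerC y x); ring. Qed.

Lemma cauchy_schwarz x y : `|inner x y| <= `|x| * `|y|.
Proof.
have [->|y_neq0] := eqVneq y 0.
  by rewrite -(scale0r 0) innerZr mul0r normr0 scale0r normr0 mulr0.
have y_gt0 : 0 < `|y| by rewrite normr_gt0.
have expand : `|(`|y| ^+ 2) *: x - inner x y *: y| ^+ 2 =
    `|y| ^+ 2 * ((`|x| * `|y|) ^+ 2 - inner x y ^+ 2).
  rewrite sqr_normB !innerZl !innerZr !normrZ !exprMn !real_normK ?num_real //.
  ring.
have := sqr_ge0 `|(`|y| ^+ 2) *: x - inner x y *: y|.
rewrite expand pmulr_rge0 ?exprn_gt0 // subr_ge0 -real_normK ?num_real //.
by rewrite ler_pXn2r ?nnegrE ?mulr_ge0.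
Qed.

Lemma inner_le_norm n y : `|n| = 1 -> inner n y <= `|y|.
Proof.
move=> n_unit; apply: le_trans (ler_norm _) _.
by rewrite -[leRHS]mul1r -n_unit cauchy_schwarz.
Qed.

Lemma differentiable_half_sqr_norm x :
  differentiable (fun y : H => 2^-1 * `|y| ^+ 2) x.
Proof.
pose dx : {linear H -> R} :=
  HB.pack (inner x) (GRing.isLinear.Build _ _ _ _ _ (inner_linear x)).
have dx_cont : continuous dx.
  apply/bounded_linear_continuous/linear_boundedP; near=> k => y /=.
  by apply: le_trans (cauchy_schwarz x y) _; rewrite ler_wpM2r.
have dx_diff : (fun y : H => 2^-1 * `|y| ^+ 2) \o shift x =
    cst (2^-1 * `|x| ^+ 2) + dx +o_ 0 id.
  apply/eqaddoP => eps eps_gt0; near=> y.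
  rewrite /= !fctE sqr_normD (innerC y x).
  have -> : 2^-1 * (`|y| ^+ 2 + 2 * inner x y + `|x| ^+ 2) -
      (2^-1 * `|x| ^+ 2 + inner x y) = 2^-1 * `|y| ^+ 2 by field.
  rewrite normrM normrX !normr_id ger0_norm // expr2 mulrA ler_wpM2r //.
  rewrite -ler_pdivlMl // mulrC.
  near: y; apply/nbhs_norm0P; exists (eps / 2^-1); first by rewrite /= divr_gt0.
  by move=> y /= /ltW.
by apply/diff_locallyP; rewrite (diff_unique dx_cont dx_diff).
Unshelve. all: by end_near. Qed.

Lemma exists_unit_orthogonal_range (W : nat) (J : {linear 'rV[R]_W -> H})
    (v : 'I_W.+1 -> H) :
  lin_indep v -> exists2 n, `|n| = 1 & forall w, inner n (J w) = 0.
Proof.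
move=> v_indep.
pose M : 'M[R]_(W.+1, W) := \matrix_(j, i) inner (v j) (J (delta_mx 0 i)).
have kerM_neq0 : kermx M != 0.
  by rewrite kermx_eq0; apply: contraTneq (rank_leq_col M) => ->; rewrite ltnn.
have [i ci_neq0] : exists i, row i (kermx M) != 0.
  apply/existsP; apply: contraNT kerM_neq0; rewrite negb_exists => /forallP ci0.
  by apply/eqP/row_matrixP => i; rewrite row0; apply/eqP/negPn.
set c := row i (kermx M) in ci_neq0.
have cM0 : c *m M = 0 by apply/sub_kermxP; exact: row_sub.
pose m := \sum_j c 0 j *: v j.
have m_orth_basis k : inner m (J (delta_mx 0 k)) = 0.
  transitivity ((c *m M) 0 k); last by rewrite cM0 mxE.
  rewrite inner_suml mxE; apply: eq_bigr => j _.
  by rewrite innerZl !mxE.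
have m_orth w : inner m (J w) = 0.
  rewrite [w]row_sum_delta linear_sum /= innerC inner_suml big1 // => k _.
  by rewrite linearZ /= innerZl innerC m_orth_basis mulr0.
have m_neq0 : m != 0.
  apply: contraNneq ci_neq0 => m0; apply/eqP/rowP => j.
  by rewrite [RHS]mxE; exact: v_indep m0 j.
exists (`|m|^-1 *: m); first by rewrite normrZ normfV normr_id mulVf ?normr_eq0.
by move=> w; rewrite innerZl m_orth mulr0.
Qed.

Section Trap.
Variable W : nat.
Variables (Phi J : 'rV[R]_W -> H) (n : H) (c r : R).
Hypotheses (n_unit : `|n| = 1) (n_orth : forall x, inner n (J x) = 0).
Hypotheses (c_gt0 : 0 < c) (J_ge : forall x, c * `|x| <= `|J x|).
Hypotheses (r_gt0 : 0 < r)
  (Phi_approx : forall x, `|x| <= r -> `|Phi x - Phi 0 - J x| <= c / 8 * `|x|).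

Local Notation a := (c * r / 8).

Variable f : H.
Hypothesis f_near : ball (Phi 0 + (2 * a) *: n) (a / 2) f.

Let h := f - Phi 0 - (2 * a) *: n.

Fact a_gt0 : 0 < a. Proof. by rewrite !divr_gt0 ?mulr_gt0. Qed.

Fact h_small : `|h| < a / 2.
Proof. by rewrite /h -addrA -opprD distrC; move: f_near; rewrite -ball_normE. Qed.

Fact f_sub_Phi0 : f - Phi 0 = (2 * a) *: n + h.
Proof. by rewrite /h subrKC. Qed.

Fact f_sub_Phi x : f - Phi x = (f - Phi 0) - (J x + (Phi x - Phi 0 - J x)).
Proof. by rewrite [J x + _]addrC subrK opprB addrA subrK. Qed.

Fact remainder_le x : `|x| <= r -> `|Phi x - Phi 0 - J x| <= a.
Proof.
move=> x_le; apply: le_trans (Phi_approx x_le) _.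
by rewrite mulrAC ler_pM2r ?invr_gt0 // ler_pM2l.
Qed.

Lemma dist_target_ge x : `|x| <= r -> a / 2 <= `|f - Phi x|.
Proof.
move=> x_le; have e_le := remainder_le x_le.
have : inner n (f - Phi x) = 2 * a + inner n h - inner n (Phi x - Phi 0 - J x).
  rewrite f_sub_Phi f_sub_Phi0 innerBr !innerDr.
  rewrite innerZr inner_self n_unit n_orth; ring.
have := inner_le_norm (f - Phi x) n_unit.
have := inner_le_norm (Phi x - Phi 0 - J x) n_unit.
have := inner_le_norm (- h) n_unit.
rewrite normrN -scaleN1r innerZr.
have := h_small; lra.
Qed.

Lemma loss_origin_lt_sphere x : `|x| = r -> loss Phi f 0 < loss Phi f x.
Proof.
move=> x_eq; set e := Phi x - Phi 0 - J x; set v := J x + e.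
have a_pos := a_gt0.
have e_le : `|e| <= a by rewrite remainder_le ?x_eq.
have v_ge : 7 * a <= `|v|.
  have : `|J x| <= `|v| + `|e| by rewrite -{1}(addrK e (J x)) ler_normB.
  have := J_ge x; rewrite x_eq; lra.
have cross_le : inner (f - Phi 0) v <= a / 2 * `|v| + 2 * a * a.
  rewrite f_sub_Phi0 innerDl innerZl innerDr n_orth add0r.
  have : inner h v <= a / 2 * `|v|.
    apply: le_trans (ler_norm _) (le_trans (cauchy_schwarz h v) _).
    by apply: ler_wpM2r => //; exact: ltW h_small.
  have : inner n e <= a := le_trans (inner_le_norm e n_unit) e_le.
  rewrite -(ler_pM2l (_ : 0 < 2 * a)) ?mulr_gt0 //; lra.
have : 7 * a * (6 * a) <= `|v| * (`|v| - a) by apply: ler_pM; lra.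
rewrite /loss (f_sub_Phi x) -/e -/v (sqr_normB (f - Phi 0)).
have : 0 < a * a by rewrite mulr_gt0.
rewrite ltr_pM2l ?invr_gt0 //; lra.
Qed.

Lemma not_GF_learnable_near :
  (forall x, differentiable Phi x) -> ~ GF_learnable Phi f.
Proof.
move=> Phi_diff [w [w_GF inf_eq]].
have L_diff x : differentiable (loss Phi f) x.
  have -> : loss Phi f = (fun y => 2^-1 * `|y| ^+ 2) \o (fun w => f - Phi w) by [].
  apply: differentiable_comp; last exact: differentiable_half_sqr_norm _.
  exact: differentiableB.
have w_trapped := GF_solution_trapped L_diff w_GF r_gt0 loss_origin_lt_sphere.
have a2_ge0 : 0 <= a / 2 by rewrite divr_ge0 ?ltW ?a_gt0.
have : 2^-1 * (a / 2) ^+ 2 <= 0.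
  rewrite -inf_eq; apply: lb_le_inf => [|_ [t t_ge0 <-]].
    by exists (loss Phi f (w 0)), 0 => //=; rewrite in_itv /= lexx.
  move: t_ge0; rewrite /= in_itv /= andbT => t_ge0.
  have := dist_target_ge (ltW (w_trapped t t_ge0)).
  by rewrite /loss ler_pM2l ?invr_gt0 // !expr2 => dist_ge; apply: ler_pM.
apply/negP; rewrite -ltNge mulr_gt0 ?invr_gt0 // exprn_gt0 //.
exact: divr_gt0 a_gt0 _.
Qed.

End Trap.

End InnerProduct.

Theorem theorem2 (R : realType) (W : nat) (H : completeNormedModType R)
  (inner : H -> H -> R) (Phi : 'rV[R]_W -> H) :
  (0 < W)%N ->
  is_inner_product inner ->
  (exists v : 'I_W.+1 -> H, lin_indep v) ->
  C2 Phi ->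
  injective ('d Phi 0) ->
  ~ dense (GF_learnable Phi).
Proof.
move=> _ inner_ip [v v_indep] [Phi_diff _ _] J_inj F_dense.
set J := 'd Phi 0 in J_inj.
have [c c_gt0 J_ge] :=
  injective_linear_bounded_below (diff_continuous (Phi_diff 0)) J_inj.
have [n n_unit n_orth] := exists_unit_orthogonal_range inner_ip J v_indep.
have [r r_gt0 Phi_approx] :=
  differentiable_remainder_le (Phi_diff 0) (divr_gt0 c_gt0 (ltr0n _ 8)).
pose a := c * r / 8.
have [|f [f_near f_learnable]] :=
  F_dense (ball (Phi 0 + (2 * a) *: n) (a / 2)) _ (@ball_open _ _ _ _).
- by exists (Phi 0 + (2 * a) *: n); apply: ballxx; rewrite !divr_gt0 ?mulr_gt0.
have Phi_approx0 x : `|x| <= r -> `|Phi x - Phi 0 - J x| <= c / 8 * `|x|.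
  by rewrite -[x in Phi x]addr0; exact: Phi_approx.
exact: (@not_GF_learnable_near _ _ _ inner_ip _ Phi J n c r n_unit n_orth c_gt0 J_ge
  r_gt0 Phi_approx0 f f_near Phi_diff f_learnable).
Qed.
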